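(* Let $n\ge 1$ and let $x=x_1x_2\cdots x_n\in \mathrm{Av}_n(312)$. Then $x$ lies in the image $\mathsf{Pop}_{\mathrm{Av}_n(312)}(\mathrm{Av}_n(312))$ if and only if $x_n=n$ and $x$ has no consecutive double descent, i.e. there is no index $i$ with $x_i>x_{i+1}>x_{i+2}$.
   Context: $\mathrm{Av}_n(312)$ is the set of permutations $x_1\cdots x_n$ of $[n]$ with no indices $i<j<k$ such that $x_j<x_k<x_i$, partially ordered by the restriction of the right weak order on $S_n$ (in $S_n$, $y\lessdot x$ iff $y$ is obtained from $x$ by swapping two adjacent entries $x_i>x_{i+1}$); it is a lattice (isomorphic to the Tamari lattice). For a finite lattice $M$, $\mathsf{Pop}_M(x)=\bigwedge(\{y\in M: y\lessdot x\}\cup\{x\})$ where covers and meets are taken in $M$. *)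

From mathcomp Require Import all_boot all_order all_fingroup.
Set Implicit Arguments. Unset Strict Implicit. Unset Printing Implicit Defensive.

(* A permutation x of [n] is represented by x : 'S_n, positions and values
   shifted down by one: x_i (1-based) corresponds to (x (i-1)).+1. *)

Definition av312 n (x : 'S_n) : bool :=
  [forall i : 'I_n, forall j : 'I_n, forall k : 'I_n,
     ((i < j) && (j < k)) ==> ~~ ((x j < x k) && (x k < x i))]%N.

(* Cover relation of the right weak order on S_n, oriented from the larger
   element x to the smaller y: y is obtained from x by swapping the adjacent
   entries in positions i, i+1 where x_i > x_{i+1}. *)
Definition swap_desc n (x y : 'S_n) : bool :=
  [exists i : 'I_n, exists j : 'I_n,
     [&& (val j == (val i).+1), (x j < x i)%N &
         [forall k : 'I_n, y k == x (tperm i j k)]]].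

Definition weak_le n (y x : 'S_n) : bool := connect (@swap_desc n) x y.

Definition weak_lt n (y x : 'S_n) : bool := (y != x) && weak_le y x.

Definition av_cover n (y x : 'S_n) : bool :=
  [&& av312 y, av312 x, weak_lt y x &
      ~~ [exists z : 'S_n, [&& av312 z, weak_lt y z & weak_lt z x]]].

Definition pop_set n (x : 'S_n) : pred 'S_n :=
  fun y => av_cover y x || (y == x).

Definition is_meet_av n (S : pred 'S_n) (z : 'S_n) : bool :=
  [&& av312 z, [forall y, S y ==> weak_le z y] &
      [forall w : 'S_n, (av312 w && [forall y, S y ==> weak_le w y]) ==> weak_le w z]].

Definition in_pop_image n (x : 'S_n) : bool :=
  [exists w : 'S_n, av312 w && is_meet_av (pop_set w) x].

Definition no_double_descent n (x : 'S_n) : bool :=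
  [forall i : 'I_n, forall j : 'I_n, forall k : 'I_n,
     ((val j == (val i).+1) && (val k == (val j).+1)) ==>
       ~~ ((x j < x i) && (x k < x j))]%N.

(* Inversion sets characterise the right weak order. A 312-avoiding
   permutation x is determined by its span function: span x u is the largest
   v such that u+1, ..., v all occur before u in x. Span functions are
   exactly the nested functions m (u <= m u, and the intervals [u, m u] are
   pairwise nested or disjoint), and the weak order becomes the pointwise
   order on them; this is the bracket-vector model of the Tamari lattice. A
   lower cover of w in Av(312) shortens the interval of a single b so that it
   ends just before its last maximal sub-interval, hence Pop performs all
   these shortenings at once. The nested functions obtained this way are
   those in which no interval but the last reaches n, and no interval
   starting strictly inside [c, m c) ends at m c; for such an m, extending
   every nontrivial interval to the next point that closes it gives a
   preimage. Read back on x, the two conditions say x_n = n and that x has no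
   double descent. *)

From mathcomp Require Import all_boot all_order all_fingroup zify.
Set Implicit Arguments. Unset Strict Implicit. Unset Printing Implicit Defensive.

Lemma widen_ord_inj m n (mn : (m <= n)%N) : injective (widen_ord mn).
Proof. by move=> i j [/val_inj]. Qed.

Lemma card_ord_lt n k : (k <= n)%N -> #|[set i : 'I_n | (i < k)%N]| = k.
Proof.
move=> kn; rewrite -[RHS]card_ord -(card_imset _ (@widen_ord_inj k n kn)).
apply: eq_card => i; rewrite inE; apply/idP/imsetP => [ik|[j _ ->] /=]; last exact: ltn_ord.
by exists (Ordinal ik); last apply: val_inj.
Qed.

Section WeakOrder.
Variable n : nat.
Implicit Types (x y : 'S_n) (a b c u v : 'I_n).

Definition pos x u : 'I_n := (x^-1)%g u.
Definition before x a b : bool := (pos x a < pos x b)%N.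

Lemma posK x : cancel (pos x) x. Proof. exact: permKV. Qed.
Lemma perm_posK x : cancel x (pos x). Proof. exact: permK. Qed.
Lemma pos_inj x : injective (pos x). Proof. exact: perm_inj. Qed.

Lemma before_trans x b a c : before x a b -> before x b c -> before x a c.
Proof. exact: ltn_trans. Qed.

Lemma before_irr x a : before x a a = false.
Proof. exact: ltnn. Qed.

Lemma negb_before x a b : a != b -> ~~ before x a b = before x b a.
Proof.
move=> ab; rewrite /before -leqNgt leq_eqVlt orbC; case: ltnP => //= _.
by apply/negbTE; apply: contra ab => /eqP/val_inj/pos_inj->.
Qed.

Lemma before_asym x a b : before x a b -> ~~ before x b a.
Proof. by rewrite /before -leqNgt => /ltnW. Qed.

Lemma before_total x a b : a != b -> ~~ before x a b -> before x b a.
Proof. by move=> /negb_before ->. Qed.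

Lemma card_before x u : #|[pred t | before x t u]| = pos x u.
Proof.
rewrite -(card_ord_lt (ltnW (ltn_ord (pos x u)))) -(card_preimset _ (@pos_inj x)).
by apply: eq_card => t; rewrite !inE.
Qed.

Lemma eq_before x y : (forall a b, before x a b = before y a b) -> x = y.
Proof.
move=> E; apply: (can_inj (@invgK _)); apply/permP => u; apply: val_inj.
change (pos x u = pos y u :> nat); rewrite -!card_before.
by apply: eq_card => t; rewrite !inE.
Qed.

Definition inv_sub y x := forall u v, (u < v)%N -> before y v u -> before x v u.

Lemma inv_sub_trans x y z : inv_sub z y -> inv_sub y x -> inv_sub z x.
Proof. by move=> zy yx u v uv /(zy _ _ uv) /(yx _ _ uv). Qed.

Lemma inv_sub_rev x y u v : inv_sub y x -> (u < v)%N -> before x u v -> before y u v.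
Proof.
move=> yx uv xuv; apply: before_total; first by rewrite neq_ltn uv orbT.
by apply/negP => /(yx _ _ uv); apply/negP; apply: before_asym.
Qed.

Lemma inv_sub_anti x y : inv_sub x y -> inv_sub y x -> x = y.
Proof.
move=> xy yx; have E u v : (u < v)%N -> before x v u = before y v u.
  by move=> uv; apply/idP/idP; [apply: xy | apply: yx].
apply: eq_before => a b; case: (ltngtP a b) => [ab|ba|/val_inj->]; last by rewrite !before_irr.
- have ba : b != a by rewrite neq_ltn ab orbT.
  by rewrite -(negb_before x ba) -(negb_before y ba) E.
- exact: E.
Qed.

Definition lost x y a b := [&& (b < a)%N, before x a b & before y b a].

Lemma exists_lost x y : inv_sub y x -> x != y -> exists a b, lost x y a b.
Proof.
move=> yx xy; case: (pickP [pred p : 'I_n * 'I_n | lost x y p.1 p.2]) => [[a b] l|nolost].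
  by exists a, b.
case/eqP: xy; apply: inv_sub_anti yx => u v uv xvu.
have := nolost (v, u); rewrite /= /lost uv xvu /= => /negbT.
by apply: before_total; rewrite neq_ltn uv.
Qed.

Lemma lost_split x y a b c : inv_sub y x -> lost x y a b ->
  before x a c -> before x c b -> lost x y a c || lost x y c b.
Proof.
move=> yx /and3P [ba xab yba] xac xcb; rewrite /lost xac xcb /=.
case: (ltngtP c b) => [cb|bc|/val_inj ceq]; last by rewrite ceq before_irr in xcb.
  by rewrite (ltn_trans cb ba) (before_trans (inv_sub_rev yx cb xcb) yba).
case: (ltngtP c a) => [ca|ac|/val_inj ceq]; last by rewrite ceq before_irr in xac.
  case: (boolP (before y c b)) => ycb; first by rewrite (before_trans ycb yba).
  by rewrite (before_total _ ycb) ?orbT // neq_ltn bc orbT.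
by rewrite (before_trans yba (inv_sub_rev yx ac xac)).
Qed.

Lemma lost_adjacent x y a b : inv_sub y x -> lost x y a b ->
  exists a' b', lost x y a' b' /\ pos x b' = (pos x a').+1 :> nat.
Proof.
move=> yx; move: {2}(pos x b - pos x a) (leqnn (pos x b - pos x a)) => d.
elim: d a b => [|d IH] a b hd l; have /and3P [_ xab _] := l.
  by move: hd xab; rewrite /before; lia.
have [adj|nadj] := eqVneq (pos x b : nat) (pos x a).+1; first by exists a, b.
have kn : ((pos x a).+1 < n)%N.
  by move: xab nadj; rewrite /before; have := ltn_ord (pos x b); lia.
set c := x (Ordinal kn).
have pc : pos x c = (pos x a).+1 :> nat by rewrite /c perm_posK.
have xac : before x a c by rewrite /before pc.
have xcb : before x c b by move: xab nadj; rewrite /before pc; lia.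
case/orP: (lost_split yx l xac xcb) => l'; [apply: (IH a c) | apply: (IH c b)] => //;
  by move: hd xab nadj; rewrite /before pc; lia.
Qed.

Lemma pos_tperm x (i j : 'I_n) u : pos (tperm i j * x)%g u = tperm i j (pos x u).
Proof. by rewrite /pos invMg permM tpermV. Qed.

Lemma before_tperm x (i j : 'I_n) u v : val j = (val i).+1 ->
  ~~ ((pos x u == i) && (pos x v == j)) -> before x u v -> before (tperm i j * x)%g u v.
Proof.
move=> ij; rewrite /before !pos_tperm; move: (pos x u) (pos x v) => p q.
have ji : j != i by rewrite -val_eqE ij neq_ltn ltnSn orbT.
have tpE r : val (tperm i j r) =
    if val r == val i then val j else if val r == val j then val i else val r.
  rewrite !val_eqE; case: (eqVneq r i) => [->|ri]; first by rewrite tpermL.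
  case: (eqVneq r j) => [->|rj]; first by rewrite tpermR.
  by rewrite tpermD // eq_sym.
rewrite !tpE -!val_eqE.
by case: (val p =P val i) => ?; case: (val p =P val j) => ?;
   case: (val q =P val i) => ?; case: (val q =P val j) => ? /=; simpl in *; lia.
Qed.

Lemma swap_descP x y : reflect
  (exists i j : 'I_n, [/\ val j = (val i).+1, (x j < x i)%N & y = (tperm i j * x)%g])
  (swap_desc x y).
Proof.
apply: (iffP existsP) => [[i /existsP [j /and3P [/eqP ij xji /forallP yE]]]|[i [j [ij xji ->]]]].
  by exists i, j; split=> //; apply/permP => k; rewrite permM; apply/eqP.
by exists i; apply/existsP; exists j; rewrite ij eqxx xji; apply/forallP => k; rewrite permM.
Qed.

Lemma swap_desc_inv_sub x y : swap_desc x y -> inv_sub y x.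
Proof.
case/swap_descP => i [j [ij xji ->]] u v uv.
have vu : u != v by rewrite neq_ltn uv.
rewrite -!(negb_before _ vu); apply: contra; apply: before_tperm ij _.
by apply/andP => -[/eqP pu /eqP pv]; move: xji; rewrite -pu -pv !posK ltnNge ltnW.
Qed.

Lemma weak_le_inv_sub x y : weak_le y x -> inv_sub y x.
Proof.
move=> /connectP [p]; elim: p x => [|z p IH] x /=; first by move=> _ -> u v.
by move=> /andP [xz zp] yl; apply: inv_sub_trans (IH z zp yl) (swap_desc_inv_sub xz).
Qed.

Definition ninv x := #|[set p : 'I_n * 'I_n | (p.2 < p.1)%N && before x p.1 p.2]|.

Lemma inv_sub_step x y : inv_sub y x -> x != y ->
  exists2 x', swap_desc x x' & inv_sub y x' /\ (ninv x' < ninv x)%N.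
Proof.
move=> yx xy; have [a0 [b0 l0]] := exists_lost yx xy.
have [a [b [l adj]]] := lost_adjacent yx l0; have /and3P [ba xab yba] := l.
set i := pos x a in adj; set j := pos x b in adj.
have sw : swap_desc x (tperm i j * x)%g by apply/swap_descP; exists i, j; rewrite !posK.
exists (tperm i j * x)%g => //; split.
  move=> u v uv yvu; apply: before_tperm adj _ (yx _ _ uv yvu).
  apply/andP => -[/eqP/pos_inj ea /eqP/pos_inj eb].
  by move: yvu; rewrite ea eb => /before_asym; rewrite yba.
apply: proper_card; apply/properP; split.
  apply/subsetP => -[u v]; rewrite !inE /= => /andP [vu x'uv].
  by rewrite vu (swap_desc_inv_sub sw vu x'uv).
exists (a, b); first by rewrite !inE /= ba xab.
by rewrite !inE /= ba /before !pos_tperm tpermL tpermR -leqNgt adj.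
Qed.

Lemma inv_sub_weak_le x y : inv_sub y x -> weak_le y x.
Proof.
move: {2}(ninv x) (leqnn (ninv x)) => k; elim: k x => [|k IH] x xk yx;
  have [->|xy] := eqVneq x y; try exact: connect0;
  have [x' sw [yx' lt]] := inv_sub_step yx xy.
  by move: lt xk; lia.
by apply: connect_trans (connect1 sw) (IH x' _ yx'); move: lt xk; lia.
Qed.

Lemma weak_leE x y : weak_le y x <-> inv_sub y x.
Proof. by split; [exact: weak_le_inv_sub | exact: inv_sub_weak_le]. Qed.

End WeakOrder.

Section Span.
Variable n : nat.
Implicit Types (x y : 'S_n) (m : 'I_n -> 'I_n) (a b c t u v : 'I_n).

Definition avoids312 x := forall a b c, (a < b)%N -> (b < c)%N ->
  before x c a -> before x a b -> False.

Lemma av312P x : reflect (avoids312 x) (av312 x).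
Proof.
apply: (iffP forallP) => [H a b c ab bc xca xab | H i].
  move: (H (pos x c)) => /forallP /(_ (pos x a)) /forallP /(_ (pos x b)) /implyP.
  by rewrite /before in xca xab; rewrite xca xab !posK ab bc => /(_ isT).
apply/forallP => j; apply/forallP => k; apply/implyP => /andP [ij jk].
apply/negP => /andP [xjk xki]; apply: (H (x j) (x k) (x i) xjk xki).
  by rewrite /before !perm_posK.
by rewrite /before !perm_posK.
Qed.

Definition span_pred x u : pred 'I_n := fun v => (u <= v)%N &&
  [forall t : 'I_n, ((u < t)%N && (t <= v)%N) ==> before x t u].

Definition span x u : 'I_n := [arg max_(v > u | span_pred x u v) (v : nat)].

Lemma span_spec x u :
  span_pred x u (span x u) /\ forall v, span_pred x u v -> (v <= span x u)%N.
Proof.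
rewrite /span; case: arg_maxnP => [|v Pv vmax]; last by split.
by rewrite /span_pred leqnn; apply/forallP => t; apply/implyP; lia.
Qed.

Lemma span_ge x u : (u <= span x u)%N.
Proof. by case: (span_spec x u) => /andP []. Qed.

Lemma spanE x u v : avoids312 x -> (u < v)%N -> before x v u = (v <= span x u)%N.
Proof.
move=> x312 uv; apply/idP/idP => [xvu|vs].
  apply: (span_spec x u).2; rewrite /span_pred ltnW //=.
  apply/forallP => t; apply/implyP => /andP [ut tv].
  case: (ltngtP t v) tv => // [tv _|/val_inj -> //].
  apply: before_total; first by rewrite neq_ltn ut.
  by apply/negP => xut; apply: (x312 u t v).
by case: (span_spec x u) => /andP [_ /forallP /(_ v)]; rewrite uv vs.
Qed.

Definition nested m := (forall u, u <= m u)%N /\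
  (forall u v, (u < v)%N -> (v <= m u)%N -> (m v <= m u)%N).

Lemma span_nested x : avoids312 x -> nested (span x).
Proof.
move=> x312; split=> [|u v uv vs]; first exact: span_ge.
case: (ltngtP v (span x v)) (span_ge x v) => // [vsv _|/val_inj <- //].
have xsv : before x (span x v) v by rewrite spanE.
have xvu : before x v u by rewrite spanE.
by rewrite -spanE ?(before_trans xsv xvu) //; lia.
Qed.

Lemma nested_idem m u : nested m -> m (m u) = m u.
Proof.
move=> [m_ge m_nest]; apply: val_inj; apply/eqP; rewrite eqn_leq m_ge andbT.
case: (ltngtP u (m u)) (m_ge u) => // [um _|/val_inj mu _]; first exact: m_nest.
by rewrite -!mu.
Qed.

(* The order of appearance in the 312-avoider whose span is m: u comes first
   iff v lies beyond the interval of u, or u lies inside the interval of v. *)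
Definition nested_before m u v : bool :=
  if (u < v)%N then (m u < v)%N else (v < u)%N && (u <= m v)%N.

Lemma nested_before_irr m u : nested_before m u u = false.
Proof. by rewrite /nested_before ltnn. Qed.

Lemma nested_before_total m u v : u != v -> nested_before m u v || nested_before m v u.
Proof.
rewrite /nested_before; case: (ltngtP u v) => [_ _|_ _|/val_inj ->]; last by rewrite eqxx.
  by case: ltnP.
by case: ltnP; rewrite ?orbT.
Qed.

Lemma nested_before_trans m u v t : nested m ->
  nested_before m u v -> nested_before m v t -> nested_before m u t.
Proof.
move=> [m_ge m_nest].
have [<-|uv] := eqVneq u v; first by rewrite nested_before_irr.
have [<-|vt] := eqVneq v t; first by rewrite nested_before_irr.
have [<- h1 h2|ut] := eqVneq u t.
  by have := nested_before_total m uv; move: h1 h2; rewrite /nested_before;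
     case: (ltngtP u v); lia.
move: uv vt ut; rewrite -!val_eqE /= /nested_before => uv vt ut.
have := m_ge u; have := m_ge v; have := m_ge t.
have := m_nest u v; have := m_nest u t; have := m_nest v u;
have := m_nest v t; have := m_nest t u; have := m_nest t v.
by case: (ltngtP u v) => ?; case: (ltngtP v t) => ?; case: (ltngtP u t) => ?; lia.
Qed.

Definition nested_rank m u := #|[pred t | nested_before m t u]|.

Lemma nested_rank_lt m u v : nested m -> nested_before m u v ->
  (nested_rank m u < nested_rank m v)%N.
Proof.
move=> mN uv; apply: proper_card; apply/properP; split.
  by apply/subsetP => t; rewrite !inE => tu; apply: nested_before_trans uv.
by exists u; rewrite !inE ?nested_before_irr.
Qed.

Lemma nested_rank_small m u : (nested_rank m u < n)%N.
Proof.
have : (nested_rank m u <= #|predC1 u|)%N.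
  apply: subset_leq_card; apply/subsetP => t; rewrite !inE.
  by apply: contraTneq => ->; rewrite nested_before_irr.
by rewrite cardC1 card_ord; have := ltn_ord u; lia.
Qed.

Definition nested_rank_ord m u : 'I_n := Ordinal (nested_rank_small m u).

Lemma nested_rankE m u v : nested m ->
  (nested_rank m u < nested_rank m v)%N = nested_before m u v.
Proof.
move=> mN; apply/idP/idP => [ruv|]; last exact: nested_rank_lt.
have [uv|uv] := eqVneq u v; first by rewrite uv ltnn in ruv.
by case/orP: (nested_before_total m uv) => // /(nested_rank_lt mN); lia.
Qed.

Lemma nested_rank_ord_inj m : nested m -> injective (nested_rank_ord m).
Proof.
move=> mN u v /(congr1 val) /= ruv; apply/eqP; apply/negPn/negP.
by move/(nested_before_total m); rewrite -!nested_rankE // ruv ltnn.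
Qed.

Lemma exists_span m : nested m -> exists2 x, avoids312 x & span x =1 m.
Proof.
move=> mN; set x := ((perm (nested_rank_ord_inj mN))^-1)%g.
have xE u v : before x u v = nested_before m u v.
  by rewrite /before /pos invgK !permE nested_rankE.
have x312 : avoids312 x.
  move=> a b c ab bc; rewrite !xE /nested_before.
  by case: (ltngtP c a) => ca; try lia; rewrite ab; lia.
exists x => // u; apply: val_inj => /=; have [m_ge m_nest] := mN.
have key v : (u < v)%N -> (v <= span x u)%N = (v <= m u)%N.
  by move=> uv; rewrite -spanE // xE /nested_before; case: (ltngtP v u); lia.
have := key (span x u); have := key (m u); have := m_ge u; have := span_ge x u.
by rewrite !leqnn; lia.
Qed.

Lemma weak_le_span x y : avoids312 x -> avoids312 y ->
  weak_le y x <-> forall u, (span y u <= span x u)%N.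
Proof.
move=> x312 y312; rewrite weak_leE; split=> [yx u|yx u v uv].
  case: (ltngtP u (span y u)) (span_ge y u) => // [uy _|<- _]; last exact: span_ge.
  by rewrite -spanE // yx // spanE.
by rewrite !spanE // => /leq_trans; apply.
Qed.

Lemma span_inj x y : avoids312 x -> avoids312 y -> span x =1 span y -> x = y.
Proof.
by move=> x312 y312 E; apply: inv_sub_anti; apply/weak_leE/weak_le_span => // u; rewrite E.
Qed.

Lemma neq_span x y : avoids312 x -> avoids312 y ->
  (x != y) = [exists u, span x u != span y u].
Proof.
move=> x312 y312; apply/idP/existsP => [xy|[u]]; last by apply: contraNneq => ->.
apply/existsP; apply: contraNT xy => /existsPn E; apply/eqP/span_inj => // u.
exact/eqP/negPn/E.
Qed.

End Span.

Section Pop.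
Variable n : nat.
Implicit Types (x y w : 'S_n) (f g m : 'I_n -> 'I_n) (b c u v : 'I_n).

(* Start of the last maximal subinterval of (b, m b]; junk (m b) when b = m b. *)
Definition last_child m b : 'I_n :=
  [arg min_(v < m b | (b < v)%N && (m v == m b)) (v : nat)].

Lemma last_child_spec m b : nested m -> (b < m b)%N ->
  [/\ (b < last_child m b)%N, m (last_child m b) = m b &
      forall v, (b < v)%N -> m v = m b -> (last_child m b <= v)%N].
Proof.
move=> mN bm; rewrite /last_child; case: arg_minnP; first by rewrite bm nested_idem ?eqxx.
by move=> v /andP [bv /eqP mv] vmin; split=> // t bt mt; apply: vmin; rewrite bt mt eqxx.
Qed.

Lemma last_child_gt m b : nested m -> (b < m b)%N -> (b < last_child m b)%N.
Proof. by move=> mN bm; case: (last_child_spec mN bm). Qed.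

Lemma last_child_le m b : nested m -> (b < m b)%N -> (last_child m b <= m b)%N.
Proof. by move=> mN bm; case: (last_child_spec mN bm) => _ <- _; apply: mN.1. Qed.

Lemma before_last_child m b v : nested m -> (b < m b)%N -> (b < v)%N ->
  (v < last_child m b)%N -> (m v < last_child m b)%N /\ (m v < m b)%N.
Proof.
move=> mN bm bv vl; have [bl ml lmin] := last_child_spec mN bm.
have ll := last_child_le mN bm; have [m_ge m_nest] := mN.
have mvb : (m v <= m b)%N by apply: m_nest => //; lia.
have mvb' : (m v < m b)%N.
  rewrite ltn_neqAle mvb andbT; apply: contraTneq vl => /val_inj mv.
  by rewrite -leqNgt lmin.
split=> //; rewrite ltnNge; apply/negP => lmv.
by have := m_nest v _ vl lmv; rewrite ml; lia.
Qed.

Definition detach m b : 'I_n :=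
  Ordinal (leq_ltn_trans (leq_pred _) (ltn_ord (last_child m b))).

(* The lower covers of w in Av_n(312) are the cut (span w) b with b < span w b. *)
Definition cut m b u : 'I_n := if u == b then detach m b else m u.

Definition pop m u : 'I_n := if (u < m u)%N then detach m u else u.

Lemma cut_id m b : cut m b b = detach m b.
Proof. by rewrite /cut eqxx. Qed.

Lemma cut_neq m b u : u != b -> cut m b u = m u.
Proof. by rewrite /cut => /negbTE ->. Qed.

Lemma cut_le m b u : nested m -> (b < m b)%N -> (cut m b u <= m u)%N.
Proof.
move=> mN bm; have [->|ub] := eqVneq u b; last by rewrite cut_neq.
by rewrite cut_id /=; have := last_child_le mN bm; lia.
Qed.

Lemma cut_neq_id m b : nested m -> (b < m b)%N -> cut m b b != m b.
Proof.
move=> mN bm; rewrite cut_id -val_eqE /=.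
by have := last_child_le mN bm; have := last_child_gt mN bm; lia.
Qed.

Lemma cut_nested m b : nested m -> (b < m b)%N -> nested (cut m b).
Proof.
move=> mN bm; have [bl ml _] := last_child_spec mN bm; have ll := last_child_le mN bm.
have [m_ge m_nest] := mN; split=> [u|u v uv].
  by have [->|ub] := eqVneq u b; [rewrite cut_id /=; lia | rewrite cut_neq].
move: uv; have [->|ub] := eqVneq u b; have [->|vb] := eqVneq v b => uv;
  rewrite ?cut_id ?cut_neq //=.
- move=> vb'; have vl : (v < last_child m b)%N by lia.
  by have [] := before_last_child mN bm uv vl; lia.
- by move=> bu; have := m_nest u b uv bu; lia.
- exact: m_nest.
Qed.

Lemma pop_le m u : nested m -> (pop m u <= m u)%N.
Proof.
move=> mN; rewrite /pop; case: ifP => [um|_]; last exact: mN.1.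
by have := last_child_le mN um; rewrite /=; lia.
Qed.

Lemma pop_le_cut m b u : nested m -> (b < m b)%N -> (pop m u <= cut m b u)%N.
Proof.
move=> mN bm; have [->|ub] := eqVneq u b; last by rewrite cut_neq // pop_le.
by rewrite cut_id /pop bm.
Qed.

Lemma pop_nested m : nested m -> nested (pop m).
Proof.
move=> mN; have [m_ge m_nest] := mN; split=> [u|u v uv].
  by rewrite /pop; case: ifP => // um /=; have := last_child_gt mN um; lia.
rewrite [pop m u]/pop; case: ifP => [um /= vl|_]; last lia.
have vl' : (v < last_child m u)%N by lia.
by have [] := before_last_child mN um uv vl'; have := pop_le v mN; lia.
Qed.

Lemma exists_cut_above m g : nested m -> nested g -> (forall u, g u <= m u)%N ->
  (exists u : 'I_n, g u != m u) ->
  exists2 b : 'I_n, (b < m b)%N & forall u, (g u <= cut m b u)%N.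
Proof.
move=> mN gN gm [u0 gmu0].
case: (@arg_maxnP _ u0 (fun b => g b != m b) val gmu0) => b gmb bmax.
have above v : (b < v)%N -> g v = m v.
  by move=> bv; apply/eqP; apply: contraTT bv => /bmax; rewrite -leqNgt.
have bm : (b < m b)%N.
  by have := gN.1 b; have := gm b; move: gmb; rewrite -val_eqE /=; lia.
exists b => // u; have [->|ub] := eqVneq u b; last by rewrite cut_neq.
rewrite cut_id /=; have [bl ml _] := last_child_spec mN bm.
rewrite -ltnS prednK; last by lia.
rewrite ltnNge; apply: contraNN gmb => lc; rewrite -val_eqE eqn_leq gm /=.
by rewrite -ml -above //; apply: gN.2.
Qed.

Lemma cut_weak_lt w y b : avoids312 w -> avoids312 y -> (b < span w b)%N ->
  span y =1 cut (span w) b -> weak_lt y w.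
Proof.
move=> w312 y312 bw yE; have wN := span_nested w312.
rewrite /weak_lt neq_span //; apply/andP; split.
  by apply/existsP; exists b; rewrite yE cut_neq_id.
by apply/weak_le_span => // u; rewrite yE cut_le.
Qed.

Lemma av_cover_cut w y : avoids312 w -> av_cover y w ->
  exists2 b : 'I_n, (b < span w b)%N & span y =1 cut (span w) b.
Proof.
move=> w312 /and4P [/av312P y312 _ /andP [yw yw_le] /existsPn nomid].
have wN := span_nested w312.
have [b bw yb] : exists2 b : 'I_n, (b < span w b)%N &
    forall u, (span y u <= cut (span w) b u)%N.
  apply: exists_cut_above (span_nested y312) _ _ => //.
    exact: (weak_le_span w312 y312).1.
  by move: yw; rewrite neq_span // => /existsP.
have [z z312 zE] := exists_span (cut_nested wN bw).
exists b => //; suff yz : y = z by rewrite yz.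
apply/eqP; apply: contraNT (nomid z) => yz.
rewrite (cut_weak_lt w312 z312 bw zE) /weak_lt yz andbT (introT (av312P _) z312) /=.
by apply/weak_le_span => // u; rewrite zE yb.
Qed.

Lemma cut_av_cover w y b : avoids312 w -> avoids312 y -> (b < span w b)%N ->
  span y =1 cut (span w) b -> av_cover y w.
Proof.
move=> w312 y312 bw yE; have wN := span_nested w312.
apply/and4P; split; [exact/av312P | exact/av312P | exact: cut_weak_lt yE |].
apply/existsPn => z; apply/negP => /and3P [/av312P z312 /andP [yz yz_le] /andP [zw zw_le]].
have [b' bw' zb'] : exists2 b' : 'I_n, (b' < span w b')%N &
    forall u, (span z u <= cut (span w) b' u)%N.
  apply: exists_cut_above (span_nested z312) _ _ => //.
    exact: (weak_le_span w312 z312).1.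
  by move: zw; rewrite neq_span // => /existsP.
have yz_span := (weak_le_span z312 y312).1 yz_le.
have b'b : b' = b.
  apply/eqP; apply: contraT => b'b; exfalso.
  have := yz_span b'; have := zb' b'; rewrite yE (cut_neq _ b'b) cut_id /=.
  by have := last_child_le wN bw'; have := last_child_gt wN bw'; lia.
subst b'; have zy_le : weak_le z y by apply/weak_le_span => // u; rewrite yE.
by move: yz; rewrite (inv_sub_anti ((weak_leE _ _).1 yz_le) ((weak_leE _ _).1 zy_le)) eqxx.
Qed.

Lemma pop_set_lb w z : avoids312 w -> avoids312 z ->
  (forall u, span z u <= pop (span w) u)%N -> forall y, pop_set w y -> weak_le z y.
Proof.
move=> w312 z312 zw y; have wN := span_nested w312.
case/orP => [cov|/eqP ->]; last first.
  by apply/weak_le_span => // u; apply: leq_trans (zw u) (pop_le u wN).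
have y312 : avoids312 y by case/and4P: cov => /av312P.
have [b bw yE] := av_cover_cut w312 cov.
by apply/weak_le_span => // u; rewrite yE; apply: leq_trans (zw u) (pop_le_cut u wN bw).
Qed.

Lemma pop_set_ub w z : avoids312 w -> avoids312 z ->
  (forall y, pop_set w y -> weak_le z y) -> forall u, (span z u <= pop (span w) u)%N.
Proof.
move=> w312 z312 zlb u; have wN := span_nested w312.
rewrite /pop; case: ifP => [uw|wu].
  have [y y312 yE] := exists_span (cut_nested wN uw).
  have py : pop_set w y by rewrite /pop_set (cut_av_cover w312 y312 uw yE).
  by have := (weak_le_span y312 z312).1 (zlb y py) u; rewrite yE cut_id.
have pw : pop_set w w by rewrite /pop_set eqxx orbT.
have := (weak_le_span w312 z312).1 (zlb w pw) u.
by have := span_ge w u; move: wu; lia.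
Qed.

Lemma is_meet_pop w x : avoids312 w ->
  is_meet_av (pop_set w) x <-> avoids312 x /\ span x =1 pop (span w).
Proof.
move=> w312; have wN := span_nested w312.
have [z z312 zE] := exists_span (pop_nested wN).
have zlb : forall y, pop_set w y -> weak_le z y by apply: pop_set_lb => // u; rewrite zE.
split=> [/and3P [/av312P x312 /forallP xlb /forallP xglb]|[x312 xE]].
  split=> // u; apply: val_inj; apply/eqP; rewrite eqn_leq.
  rewrite (pop_set_ub w312 x312 (fun y => implyP (xlb y))) /= -zE.
  apply: (weak_le_span x312 z312).1; apply: (implyP (xglb z)).
  by rewrite (introT (av312P _) z312); apply/forallP => y; apply/implyP; apply: zlb.
apply/and3P; split; first exact/av312P.
  by apply/forallP => y; apply/implyP; apply: pop_set_lb => // u; rewrite xE.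
apply/forallP => v; apply/implyP => /andP [/av312P v312 /forallP vlb].
apply/weak_le_span => // u; rewrite xE.
by apply: pop_set_ub => // y; apply: (implyP (vlb y)).
Qed.

Lemma eq_pop f g : nested f -> nested g -> f =1 g -> pop f =1 pop g.
Proof.
move=> fN gN fg u; rewrite /pop fg; case: ifP => // ug.
have uf : (u < f u)%N by rewrite fg.
have [fl1 fl2 fl3] := last_child_spec fN uf; have [gl1 gl2 gl3] := last_child_spec gN ug.
have fgl : (last_child f u <= last_child g u)%N by apply: fl3; rewrite // !fg.
have gfl : (last_child g u <= last_child f u)%N by apply: gl3; rewrite // -!fg.
have lfg : last_child f u = last_child g u by apply/val_inj/eqP; rewrite eqn_leq fgl gfl.
by apply: val_inj; rewrite /= lfg.
Qed.

Definition strictly_nested m := forall c v, (c < v)%N -> (v < m c)%N -> (m v < m c)%N.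

Lemma pop_strictly_nested m : nested m -> strictly_nested (pop m).
Proof.
move=> mN c v cv; rewrite [pop m c]/pop; case: ifP => [cm /= vl|_]; last lia.
have vl' : (v < last_child m c)%N by lia.
have [mvl _] := before_last_child mN cm cv vl'.
rewrite /pop; case: ifP => [vm /=|_]; last lia.
by have := last_child_le mN vm; have := last_child_gt mN vm; lia.
Qed.

End Pop.

Section Descents.
Variable n : nat.
Implicit Types (x : 'S_n) (b c v : 'I_n).

Lemma span_prev x b : avoids312 x -> (b < span x b)%N ->
  exists q : 'I_n, [/\ (q : nat).+1 = pos x b, (b < x q)%N & (x q <= span x b)%N].
Proof.
move=> x312 bs; have xsb : before x (span x b) b by rewrite spanE.
have pb : (0 < pos x b)%N by move: xsb; rewrite /before; lia.
pose q : 'I_n := Ordinal (leq_ltn_trans (leq_pred _) (ltn_ord (pos x b))).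
have qb : (q : nat).+1 = pos x b by rewrite /= prednK.
have xqb : before x (x q) b by rewrite /before perm_posK -qb.
have xsq : before x (span x b) (x q) || (x q == span x b).
  move: xsb; rewrite /before perm_posK -qb => /ltnSE; rewrite leq_eqVlt orbC.
  by case/orP => [->//|/eqP/val_inj <-]; rewrite posK eqxx orbT.
have bq : (b < x q)%N.
  rewrite ltn_neqAle; apply/andP; split.
    by apply: contraTneq xqb => /val_inj <-; rewrite before_irr.
  rewrite leqNgt; apply/negP => qb'; case/orP: xsq => [xsq|/eqP qs].
    by apply: (x312 (x q) b (span x b)).
  by move: qb'; rewrite qs ltnNge span_ge.
by exists q; split=> //; rewrite -spanE.
Qed.

Lemma no_double_descentP x : reflect
  (forall i j k : 'I_n, val j = (val i).+1 -> val k = (val j).+1 ->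
     (x j < x i)%N -> (x k < x j)%N -> False)
  (no_double_descent x).
Proof.
apply: (iffP forallP) => [H i j k ji kj xji xkj|H i].
  by move: (H i) => /forallP /(_ j) /forallP /(_ k); rewrite kj ji !eqxx xji xkj.
apply/forallP => j; apply/forallP => k; apply/implyP => /andP [/eqP ji /eqP kj].
by apply/negP => /andP [xji xkj]; apply: (H i j k).
Qed.

Lemma span_descent_fix x c (q : 'I_n) : avoids312 x -> no_double_descent x ->
  (q : nat).+1 = pos x c -> (c < x q)%N -> span x (x q) = x q.
Proof.
(* Otherwise the entry just before x q would be larger than x q, which is larger than c. *)
move=> x312 /no_double_descentP ndd qc cq; apply/val_inj/eqP.
rewrite eqn_leq span_ge andbT leqNgt; apply/negP => qs.
have [q' [q'q qq' _]] := span_prev x312 qs; rewrite perm_posK in q'q.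
by apply: (ndd q' q (pos x c)); rewrite ?posK.
Qed.

Lemma no_double_descent_strict x : avoids312 x -> no_double_descent x ->
  strictly_nested (span x).
Proof.
move=> x312 ndd c v cv vs; rewrite ltnNge; apply/negP => csv.
have cs : (c < span x c)%N by lia.
have [q [qc cq qs]] := span_prev x312 cs.
have qfix := span_descent_fix x312 ndd qc cq.
have xvc : before x v c by rewrite spanE //; lia.
have [vq|vq] := eqVneq v (x q); first by move: csv vs; rewrite vq qfix; lia.
have xvq : before x v (x q).
  move: xvc; rewrite /before perm_posK -qc ltnS leq_eqVlt => /orP [/eqP/val_inj pv|//].
  by move: vq; rewrite -pv posK eqxx.
case: (ltngtP v (x q)) => [lt|gt|/val_inj eq]; last by rewrite eq eqxx in vq.
  have : before x (x q) v by rewrite spanE //; lia.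
  by move/before_asym; rewrite xvq.
by move: xvq; rewrite spanE // qfix leqNgt gt.
Qed.

Lemma strictly_nested_no_double_descent x : avoids312 x ->
  strictly_nested (span x) -> no_double_descent x.
Proof.
move=> x312 strict; apply/no_double_descentP => i j k ji kj xji xkj.
have xik : before x (x i) (x k) by rewrite /before !perm_posK kj ji.
have xi_le : (x i <= span x (x k))%N by rewrite -spanE // (ltn_trans xkj xji).
have xj_lt : (x j < span x (x k))%N by lia.
have sk_le : (span x (x k) <= span x (x j))%N.
  have : before x (span x (x k)) (x k) by rewrite spanE //; lia.
  rewrite /before perm_posK kj ltnS leq_eqVlt => /orP [/eqP/val_inj pj|psj].
    by move: xj_lt; rewrite -pj posK ltnn.
  by rewrite -spanE // /before perm_posK.
by have := strict (x k) (x j) xkj xj_lt; lia.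
Qed.

Lemma no_double_descent_span x : avoids312 x ->
  no_double_descent x <-> strictly_nested (span x).
Proof.
move=> x312; split; first exact: no_double_descent_strict.
exact: strictly_nested_no_double_descent.
Qed.

End Descents.

Section PopImage.
Variable n : nat.
Implicit Types (x w : 'S_n.+1) (m : 'I_n.+1 -> 'I_n.+1) (c k s t u v : 'I_n.+1).

Definition max_isolated m := forall v, (v < n)%N -> (m v < n)%N.

Lemma max_isolated_span x : avoids312 x ->
  x ord_max = ord_max <-> max_isolated (span x).
Proof.
move=> x312; split=> [xmax v vn|iso].
  have pmax : pos x ord_max = ord_max by rewrite -{1}xmax perm_posK.
  have : ~~ before x ord_max v by rewrite /before pmax -leqNgt -ltnS ltn_ord.
  by rewrite spanE //= -ltnNge.
set v := x ord_max; have [//|vmax] := eqVneq v ord_max.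
have vn : (v < n)%N by move: vmax; rewrite -val_eqE /=; have := ltn_ord v; lia.
have : ~~ before x ord_max v by rewrite spanE //= -ltnNge iso.
rewrite negb_before 1?eq_sym // /before /v perm_posK /= => lt.
by have := ltn_ord (pos x ord_max); lia.
Qed.

Lemma pop_max_isolated m : max_isolated (pop m).
Proof. by move=> v vn; rewrite /pop; case: ifP => //= _; have := ltn_ord (last_child m v); lia. Qed.

Lemma nested_ord_max m : nested m -> m ord_max = ord_max.
Proof. by move=> [m_ge _]; apply/val_inj/eqP; rewrite /= eqn_leq -ltnS ltn_ord (m_ge ord_max). Qed.

Section Unpop.
Variable m : 'I_n.+1 -> 'I_n.+1.
Hypotheses (mN : nested m) (m_iso : max_isolated m) (m_strict : strictly_nested m).

Definition closing k : pred 'I_n.+1 := fun t => [&& (k < t)%N, m t == t &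
  [forall s : 'I_n.+1, ((k < s)%N && (s < t)%N) ==> (m s < t)%N]].

Definition next_closing k : 'I_n.+1 := [arg min_(t < ord_max | closing k t) (t : nat)].

Lemma next_closing_spec k : (k < n)%N -> [/\ (k < next_closing k)%N,
  m (next_closing k) = next_closing k,
  (forall s, (k < s)%N -> (s < next_closing k)%N -> (m s < next_closing k)%N) &
  (forall t, (k < t)%N -> m t = t ->
     (forall s, (k < s)%N -> (s < t)%N -> (m s < t)%N) -> (next_closing k <= t)%N)].
Proof.
move=> kn; rewrite /next_closing; case: arg_minnP.
  rewrite /closing /= kn nested_ord_max // eqxx /=.
  by apply/forallP => s; apply/implyP => /andP [_ sn]; apply: m_iso.
move=> t /and3P [kt /eqP mt /forallP ts] tmin; split=> // [s ks st|t' kt' mt' t's].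
  by move: (ts s) => /implyP; apply; rewrite ks st.
apply: tmin; rewrite /closing kt' mt' eqxx /=.
by apply/forallP => s; apply/implyP => /andP [ks st']; apply: t's.
Qed.

(* Extending the interval of c to the next closing point makes [m c + 1, _]
   its last subinterval, so pop recovers m (unpop_succ, pop_unpop). *)
Definition unpop c : 'I_n.+1 := if m c == c then c else next_closing (m c).

Lemma moved_lt c : m c != c -> (c < m c)%N /\ (m c < n)%N.
Proof.
move=> mc; have cm : (c < m c)%N by move: mc; rewrite -val_eqE /=; have := mN.1 c; lia.
by split=> //; apply: m_iso; have := ltn_ord (m c); lia.
Qed.

Lemma unpop_fix c : m c = c -> unpop c = c.
Proof. by rewrite /unpop => ->; rewrite eqxx. Qed.

Lemma unpop_moved c : m c != c -> unpop c = next_closing (m c).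
Proof. by rewrite /unpop => /negbTE ->. Qed.

Lemma unpop_gt c : m c != c -> (m c < unpop c)%N.
Proof.
by move=> mc; have [_ mn] := moved_lt mc; rewrite unpop_moved //; case: (next_closing_spec mn).
Qed.

Lemma unpop_inner c v : m c != c -> (c < v)%N -> (v <= m c)%N -> (unpop v <= m c)%N.
Proof.
move=> mc cv vm; have [cm mn] := moved_lt mc.
have [mv|mv] := eqVneq (m v) v; first by rewrite unpop_fix.
have vlt : (v < m c)%N.
  rewrite ltn_neqAle vm andbT; apply: contra mv => /eqP/val_inj ->.
  by rewrite nested_idem.
have mvc := m_strict cv vlt; have [_ mvn] := moved_lt mv.
rewrite unpop_moved //; case: (next_closing_spec mvn) => _ _ _; apply=> //.
  exact: nested_idem.
by move=> s ms sm; apply: m_strict => //; have := mN.1 v; lia.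
Qed.

Lemma unpop_succ c t : m c != c -> (t : nat) = (m c).+1 -> unpop t = unpop c.
Proof.
move=> mc tc; have [cm mn] := moved_lt mc; rewrite (unpop_moved mc).
have [k1 k2 k3 k4] := next_closing_spec mn.
have [mt|mt] := eqVneq (m t) t.
  rewrite unpop_fix //; apply: val_inj => /=.
  have : (next_closing (m c) <= t)%N by apply: k4 => // [|s h1 h2]; lia.
  by lia.
have [tm tn] := moved_lt mt; have [l1 l2 l3 l4] := next_closing_spec tn.
rewrite unpop_moved //.
have le1 : (next_closing (m c) <= next_closing (m t))%N.
  apply: k4 => // [|s ks st]; first lia.
  case: (ltnP (m t) s) => hs; first exact: l3.
  have [->|st'] := eqVneq s t; first lia.
  by have := mN.2 t s; move: st'; rewrite -val_eqE /=; lia.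
have mt_lt : (m t < next_closing (m c))%N.
  rewrite ltnNge; apply/negP => hle.
  have [tk|tk] := eqVneq (next_closing (m c)) t; first by move: mt; rewrite -tk k2 eqxx.
  have tk' : (t < next_closing (m c))%N by move: tk; rewrite -val_eqE /=; lia.
  have ct : (m c < t)%N by lia.
  by have := k3 t ct tk'; lia.
have le2 : (next_closing (m t) <= next_closing (m c))%N.
  by apply: l4 => // s h1 h2; apply: k3 => //; lia.
by apply: val_inj => /=; lia.
Qed.

Lemma unpop_nested : nested unpop.
Proof.
split=> [u|u v uv].
  have [mu|mu] := eqVneq (m u) u; first by rewrite unpop_fix.
  by have := unpop_gt mu; have := mN.1 u; lia.
have [mu|mu] := eqVneq (m u) u; first by rewrite unpop_fix //; lia.
have [um mn] := moved_lt mu; have [k1 k2 k3 k4] := next_closing_spec mn.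
move=> vu; case: (leqP v (m u)) => vm.
  by have := unpop_inner mu uv vm; have := unpop_gt mu; lia.
move: vu; rewrite unpop_moved // => vk.
have [->|vk'] := eqVneq v (next_closing (m u)); first by rewrite unpop_fix.
have vlt : (v < next_closing (m u))%N by move: vk vk'; rewrite -val_eqE /=; lia.
have mvk := k3 v vm vlt.
have [mv|mv] := eqVneq (m v) v; first by rewrite unpop_fix //; lia.
have [_ mvn] := moved_lt mv.
rewrite unpop_moved //; case: (next_closing_spec mvn) => _ _ _; apply=> //.
by move=> s h1 h2; apply: k3 => //; have := mN.1 v; lia.
Qed.

Lemma pop_unpop : pop unpop =1 m.
Proof.
move=> c; have [mc|mc] := eqVneq (m c) c.
  by rewrite /pop unpop_fix // ltnn mc.
have [cm mn] := moved_lt mc; have cu : (c < unpop c)%N by have := unpop_gt mc; lia.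
pose t : 'I_n.+1 := Ordinal (mn : (m c).+1 < n.+1)%N.
have [l1 l2 l3] := last_child_spec unpop_nested cu.
have lct : last_child unpop c = t.
  apply/val_inj/eqP; rewrite /= eqn_leq; apply/andP; split.
    by apply: (l3 t); [rewrite /=; lia | exact: unpop_succ].
  rewrite ltnNge; apply/negP => lt; have lm : (last_child unpop c <= m c)%N by lia.
  by have := unpop_inner mc l1 lm; rewrite l2; have := unpop_gt mc; lia.
by apply: val_inj; rewrite /pop cu /= lct.
Qed.

End Unpop.

End PopImage.

Theorem theorem4p8 (n : nat) (x : 'S_n.+1) :
  av312 x ->
  (in_pop_image x <-> (x ord_max = ord_max /\ no_double_descent x)).
Proof.
move=> /av312P x312; rewrite (max_isolated_span x312) (no_double_descent_span x312).
split=> [/existsP [w /andP [/av312P w312 /(is_meet_pop _ w312) [_ xE]]]|[iso strict]].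
  have wN := span_nested w312.
  split=> [v vn|c v]; rewrite !xE; [exact: pop_max_isolated | exact: pop_strictly_nested].
have xN := span_nested x312.
have [w w312 wE] := exists_span (unpop_nested xN iso strict).
apply/existsP; exists w; rewrite (introT (av312P _) w312) /=.
apply/(is_meet_pop _ w312); split=> // u.
by rewrite (eq_pop (span_nested w312) (unpop_nested xN iso strict) wE) pop_unpop.
Qed.
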